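(* Consider the fully discrete scheme described in the context (the time discretization of the extended Cahn–Hilliard-type model on a rectangular grid). Assume $h_3\equiv 0$, i.e. no flux is pumped into the system. Then any solution of the scheme satisfies the discrete volume conservation law $$(\psi\tilde\phi^{n+1},1)=(\psi\tilde\phi^{n},1)=(\psi\tilde\phi^{0},1),\qquad n=1,2,\dots,$$ where $(u,v)=\Delta x\,\Delta y\sum_{i=1}^{N_x}\sum_{j=1}^{N_y}u_{i,j}v_{i,j}$.
   Context: Domain and grid: $\Omega=[-\tfrac12L_x,\tfrac12L_x]\times[-\tfrac12L_y,\tfrac12L_y]$ is divided into $N_x\times N_y$ uniform cells with $\Delta x=L_x/N_x$, $\Delta y=L_y/N_y$; grid functions $u_{i,j}$ live at cell centers $i=1,\dots,N_x$, $j=1,\dots,N_y$, with ghost indices $i=0,N_x+1$, $j=0,N_y+1$. For a cell-centered $u$ define face quantities $(A_xu)_{i+\frac12,j}=\tfrac12(u_{i+1,j}+u_{i,j})$, $(D_xu)_{i+\frac12,j}=(u_{i+1,j}-u_{i,j})/\Delta x$ ($i=0,\dots,N_x$), and analogously $(A_yu)_{i,j+\frac12}$, $(D_yu)_{i,j+\frac12}$; for a face function $w$, $(D_xw)_{i,j}=(w_{i+\frac12,j}-w_{i-\frac12,j})/\Delta x$, $(D_yw)_{i,j}=(w_{i,j+\frac12}-w_{i,j-\frac12})/\Delta y$. Set $D_h(a,u)_{i,j}=D_x(A_xa\,D_xu)_{i,j}+D_y(A_ya\,D_yu)_{i,j}$. Given data: a grid function $\psi>0$ (discrete approximation of the characteristic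 function of the original domain $\Omega_1\subset\Omega$) with $\chi=1/\psi$; constants $K>0$, $\alpha\ge0$, $\Gamma>0$, $\Delta t>0$; a positive mobility grid function $\bar M^{n+\frac12}$; time-independent grid functions $h_1,h_2,h_3$; $g(\phi)=f'(\phi)/\sqrt{2f(\phi)+2A}$ for a bulk potential $f$ and constant $A$ with $2f+2A>0$, and $\bar g^{n+\frac12}_{i,j}$ denotes $g$ evaluated at the extrapolation $\tfrac32\tilde\phi^n_{i,j}-\tfrac12\tilde\phi^{n-1}_{i,j}$ ($n\ge1$), or at $\tilde\phi^0_{i,j}$ ($n=0$). Notation $u^{n+\frac12}=\tfrac12(u^{n+1}+u^n)$. For a cell-centered $w$ define $\mathcal B(w)_{i,j}=\tfrac12\big[|D_x\psi|_{i-\frac12,j}(A_xw)_{i-\frac12,j}+|D_x\psi|_{i+\frac12,j}(A_xw)_{i+\frac12,j}+|D_y\psi|_{i,j-\frac12}(A_yw)_{i,j-\frac12}+|D_y\psi|_{i,j+\frac12}(A_yw)_{i,j+\frac12}\big]$. The scheme: given $\tilde\phi^n,q^n$, find $\tilde\phi^{n+1},q^{n+1},\mu_*^{n+\frac12}$ with, at every cell $(i,j)$, (1) $\frac{\tilde\phi^{n+1}-\tilde\phi^n}{\Delta t}=\chi\,D_h(\psi\bar M^{n+\frac12},\chi\mu_*^{n+\frac12})-\chi\,\mathcal B(h_3)$; (2) $\mu_*^{n+\frac12}=\psi\,\bar g^{n+\frac12}q^{n+\frac12}-K\,D_h(\psi,\tilde\phi^{n+\frac12})+\mathcal B\big(\alpha(\tilde\phi^{n+\frac12}-h_1)-h_2+\Gamma^{-1}\frac{\tilde\phi^{n+1}-\tilde\phi^n}{\Delta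 t}\big)$; (3) $q^{n+1}-q^n=\bar g^{n+\frac12}(\tilde\phi^{n+1}-\tilde\phi^n)$. Boundary conditions (discrete homogeneous Neumann): the ghost values of $\tilde\phi^{n},\tilde\phi^{n+1}$, of $\psi$ (hence of $\chi$), and of $\mu_*^{n+\frac12}$ equal the adjacent interior values, e.g. $u_{0,j}=u_{1,j}$, $u_{N_x+1,j}=u_{N_x,j}$, $u_{i,0}=u_{i,1}$, $u_{i,N_y+1}=u_{i,N_y}$. *)

From HB Require Import structures.
From mathcomp Require Import all_boot all_order all_algebra.
From mathcomp Require Import all_classical all_reals all_analysis.
Set Implicit Arguments. Unset Strict Implicit. Unset Printing Implicit Defensive.
Import Order.TTheory GRing.Theory Num.Theory.
Local Open Scope ring_scope.

Section Grid.
Variable R : realType.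

(* A grid function: value at cell (i,j); meaningful indices are
   i = 0..Nx+1, j = 0..Ny+1 (0 and N+1 are ghost indices). *)
Definition grid := nat -> nat -> R.

(* Face functions: the x-face i+1/2 is stored at index i (i = 0..Nx),
   the y-face j+1/2 is stored at index j (j = 0..Ny). *)
Definition Ax (u : grid) : grid := fun i j => (u i.+1 j + u i j) / 2.
Definition Ay (u : grid) : grid := fun i j => (u i j.+1 + u i j) / 2.
Definition Dxf (dx : R) (u : grid) : grid := fun i j => (u i.+1 j - u i j) / dx.
Definition Dyf (dy : R) (u : grid) : grid := fun i j => (u i j.+1 - u i j) / dy.
(* face-to-cell differences, at cell (i,j) with i,j >= 1 *)
Definition Dxc (dx : R) (w : grid) : grid := fun i j => (w i j - w i.-1 j) / dx.
Definition Dyc (dy : R) (w : grid) : grid := fun i j => (w i j - w i j.-1) / dy.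

Definition Dh (dx dy : R) (a u : grid) : grid := fun i j =>
  Dxc dx (fun i j => Ax a i j * Dxf dx u i j) i j
  + Dyc dy (fun i j => Ay a i j * Dyf dy u i j) i j.

Definition Bop (dx dy : R) (psi w : grid) : grid := fun i j =>
  (`|Dxf dx psi i.-1 j| * Ax w i.-1 j + `|Dxf dx psi i j| * Ax w i j
   + `|Dyf dy psi i j.-1| * Ay w i j.-1 + `|Dyf dy psi i j| * Ay w i j) / 2.

Definition neumann (Nx Ny : nat) (u : grid) : Prop :=
  (forall j, u 0%N j = u 1%N j) /\ (forall j, u Nx.+1 j = u Nx j) /\
  (forall i, u i 0%N = u i 1%N) /\ (forall i, u i Ny.+1 = u i Ny).

Definition ip (Nx Ny : nat) (dx dy : R) (u v : grid) : R :=
  dx * dy * \sum_(1 <= i < Nx.+1) \sum_(1 <= j < Ny.+1) u i j * v i j.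

Definition gfun (f : R -> R) (A : R) (x : R) : R :=
  (derive1 f x) / Num.sqrt (2 * f x + 2 * A).

(* gbar^{n+1/2}: g at the extrapolation 3/2 phi^n - 1/2 phi^{n-1} (n>=1),
   or at phi^0 (n=0) *)
Definition gbar (f : R -> R) (A : R) (phi : nat -> grid) (n : nat) : grid :=
  fun i j => match n with
  | 0%N => gfun f A (phi 0%N i j)
  | m.+1 => gfun f A (3/2 * phi n i j - 1/2 * phi m i j)
  end.

End Grid.

(* The scheme's update (1) with h3 = 0 says that psi (phi^{n+1} - phi^n) is dt
   times a discrete divergence D_h(a, w) with w = chi mu satisfying the Neumann
   condition.  Summed over the interior cells, each of the two parts of D_h
   telescopes to the boundary fluxes, which vanish because D_x w and D_y w are
   zero on the boundary faces; hence (psi phi^n, 1) does not depend on n. *)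
From HB Require Import structures.
From mathcomp Require Import all_boot all_order all_algebra.
From mathcomp Require Import all_classical all_reals all_analysis.
Import Order.TTheory GRing.Theory Num.Theory.
Local Open Scope ring_scope.

Section DiscreteDivergence.
Context {R : realType} {Nx Ny : nat} {dx dy : R}.

Lemma sum_Dxc (F : grid R) (N j : nat) :
  \sum_(1 <= i < N.+1) Dxc dx F i j = (F N j - F 0%N j) / dx.
Proof.
rewrite mulrBl; apply: (telescope_sumr_eq (fun k => F k.-1 j / dx)) => // k _.
by rewrite /Dxc mulrBl.
Qed.

Lemma sum_Dyc (F : grid R) (N i : nat) :
  \sum_(1 <= j < N.+1) Dyc dy F i j = (F i N - F i 0%N) / dy.
Proof.
rewrite mulrBl; apply: (telescope_sumr_eq (fun k => F i k.-1 / dy)) => // k _.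
by rewrite /Dyc mulrBl.
Qed.

Lemma sum_Dh_neumann (a w : grid R) :
  neumann Nx Ny w ->
  \sum_(1 <= i < Nx.+1) \sum_(1 <= j < Ny.+1) Dh dx dy a w i j = 0.
Proof.
move=> [w0 [wNx [w0' wNy]]].
rewrite /Dh; under eq_bigr => i _ do rewrite big_split /=.
rewrite big_split /= exchange_big /=.
have -> : \sum_(1 <= j < Ny.+1) \sum_(1 <= i < Nx.+1)
            Dxc dx (fun i j => Ax a i j * Dxf dx w i j) i j = 0.
  apply: big1 => j _; rewrite sum_Dxc /Dxf.
  by rewrite wNx w0 !subrr !mul0r !mulr0 subrr mul0r.
rewrite add0r; apply: big1 => i _; rewrite sum_Dyc /Dyf.
by rewrite wNy w0' !subrr !mul0r !mulr0 subrr mul0r.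
Qed.

Lemma neumann_map2 (op : R -> R -> R) {u v : grid R} :
  neumann Nx Ny u -> neumann Nx Ny v ->
  neumann Nx Ny (fun i j => op (u i j) (v i j)).
Proof.
move=> [u0 [uNx [u0' uNy]]] [v0 [vNx [v0' vNy]]].
by split; [|split; [|split]] => k; rewrite ?u0 ?uNx ?u0' ?uNy ?v0 ?vNx ?v0' ?vNy.
Qed.

Lemma Bop_eq0 (psi w : grid R) (i j : nat) :
  (forall i j, w i j = 0) -> Bop dx dy psi w i j = 0.
Proof.
by move=> w0; rewrite /Bop /Ax /Ay !w0 !(mul0r, addr0, mulr0).
Qed.

Lemma ip1_eq_of_Dh_increment (c : R) {u v a w : grid R} :
  neumann Nx Ny w ->
  (forall i j, (1 <= i <= Nx)%N -> (1 <= j <= Ny)%N ->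
     u i j - v i j = c * Dh dx dy a w i j) ->
  ip Nx Ny dx dy u (fun _ _ => 1) = ip Nx Ny dx dy v (fun _ _ => 1).
Proof.
move=> Nw incr; apply/eqP; rewrite -subr_eq0 /ip -mulrBr -sumrB.
have -> : \sum_(1 <= i < Nx.+1) (\sum_(1 <= j < Ny.+1) u i j * 1
                               - \sum_(1 <= j < Ny.+1) v i j * 1)
        = c * \sum_(1 <= i < Nx.+1) \sum_(1 <= j < Ny.+1) Dh dx dy a w i j.
  rewrite mulr_sumr; apply: eq_big_nat => i i_in; rewrite -sumrB mulr_sumr.
  by apply: eq_big_nat => j j_in; rewrite !mulr1 incr // -ltnS.
by rewrite sum_Dh_neumann // !mulr0.
Qed.

End DiscreteDivergence.

Theorem theorem1 (R : realType) (Lx Ly : R) (Nx Ny : nat)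
  (psi : grid R) (K alpha Gamma dt A : R) (f : R -> R)
  (Mbar : nat -> grid R) (h1 h2 h3 : grid R)
  (phi q mu : nat -> grid R) :
  0 < Lx -> 0 < Ly -> (0 < Nx)%N -> (0 < Ny)%N ->
  let dx := Lx / Nx%:R in
  let dy := Ly / Ny%:R in
  (forall i j, (i <= Nx.+1)%N -> (j <= Ny.+1)%N -> 0 < psi i j) ->
  let chi : grid R := fun i j => (psi i j)^-1 in
  0 < K -> 0 <= alpha -> 0 < Gamma -> 0 < dt ->
  (forall x, derivable f x 1) ->
  (forall x, 0 < 2 * f x + 2 * A) ->
  (forall n i j, (i <= Nx.+1)%N -> (j <= Ny.+1)%N -> 0 < Mbar n i j) ->
  (* no flux pumped into the system *)
  (forall i j, h3 i j = 0) ->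
  (* boundary conditions *)
  neumann Nx Ny psi ->
  (forall n, neumann Nx Ny (phi n)) ->
  (forall n, neumann Nx Ny (mu n)) ->
  (* the scheme, at every interior cell; mu n is mu_*^{n+1/2} *)
  (forall n i j, (1 <= i <= Nx)%N -> (1 <= j <= Ny)%N ->
     let g := gbar f A phi n in
     let phih : grid R := fun i j => (phi n.+1 i j + phi n i j) / 2 in
     let qh : grid R := fun i j => (q n.+1 i j + q n i j) / 2 in
     let dphi : grid R := fun i j => (phi n.+1 i j - phi n i j) / dt in
     [/\ dphi i j =
           chi i j * Dh dx dy (fun i j => psi i j * Mbar n i j)
                              (fun i j => chi i j * mu n i j) i j
           - chi i j * Bop dx dy psi h3 i j,
         mu n i j =
           psi i j * g i j * qh i j - K * Dh dx dy psi phih i j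
           + Bop dx dy psi (fun i j => alpha * (phih i j - h1 i j) - h2 i j
                                       + Gamma^-1 * dphi i j) i j
       & q n.+1 i j - q n i j = g i j * (phi n.+1 i j - phi n i j)]) ->
  forall n, (1 <= n)%N ->
    ip Nx Ny dx dy (fun i j => psi i j * phi n.+1 i j) (fun _ _ => 1) =
      ip Nx Ny dx dy (fun i j => psi i j * phi n i j) (fun _ _ => 1) /\
    ip Nx Ny dx dy (fun i j => psi i j * phi n i j) (fun _ _ => 1) =
      ip Nx Ny dx dy (fun i j => psi i j * phi 0%N i j) (fun _ _ => 1).
Proof.
move=> _ _ _ _ dx dy psi_gt0 chi _ _ _ dt_gt0 _ _ _ h3_0 Npsi _ Nmu scheme.
have step n : ip Nx Ny dx dy (fun i j => psi i j * phi n.+1 i j) (fun _ _ => 1)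
            = ip Nx Ny dx dy (fun i j => psi i j * phi n i j) (fun _ _ => 1).
  apply: (ip1_eq_of_Dh_increment dt (a := fun i j => psi i j * Mbar n i j)
            (neumann_map2 (fun p m => p^-1 * m) Npsi (Nmu n))).
  move=> i j i_in j_in; have [upd _ _] := scheme n i j i_in j_in.
  rewrite Bop_eq0 // mulr0 subr0 in upd.
  have psi_neq0 : psi i j != 0.
    case/andP: i_in j_in => _ /leqW iNx /andP[_ /leqW jNy].
    by rewrite lt0r_neq0 ?psi_gt0.
  rewrite -mulrBr -[_ - _](divfK (lt0r_neq0 dt_gt0)) upd /chi.
  by rewrite !mulrA mulfV // mul1r mulrC.
move=> n _; split; first exact: step.
by elim: n => // n IH; rewrite step.
Qed.
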